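(* Let $\Gamma$ be a connected $3$-plane drawing. Then \[ 2|E_2|+4|E_3| \;\ge\; 3N(A_3)+N(B_4)+4N(A_4)+2N(B_5)+5N(A_5)+\tau(B_4,L)+\tau(B_5,L)+\tau(A_3,L)+\tau(A_5,L). \]
   Context: Drawings are on the sphere: vertices are distinct points, edges (of a graph possibly with parallel edges, no loops) are Jordan arcs; any two edges share finitely many points, each a common endpoint or a proper crossing; no three edges cross at one point; no edge crosses itself; adjacent edges do not cross. A drawing is $3$-plane if every edge is crossed at most three times. For $i\in\{0,1,2,3\}$, $E_i$ is the set of edges with exactly $i$ crossings. An edge with $i$ crossings is split into $i+1$ edge-segments; an edge-segment is inner if both its endpoints are crossings and outer otherwise. The planarization replaces each crossing by a degree-$4$ vertex; the drawing is connected if its planarization is connected. Cells are the components of the sphere minus all vertices and edges; the boundary of a cell is a cyclic sequence alternating between edge-segments and vertices/crossings. The size of a cell is the number of vertex incidences plus edge-segment incidences along its boundary (crossings not counted). Cell types: $A_3$: three crossings and three inner edge-segments, no vertex. $A_4$: four crossings and four inner edge-segments. $B_4$: boundary $v$, outer segment, crossing, inner segment, crossing, outer segment. $B_5$: boundary $v$, outer segment, crossing, inner segment, crossing, inner segment, crossing, outer segment. $A_5$: five crossings and five inner segments. $L$: any cell of size at least $6$. $N(T)$ is the number of cells of type $T$. Trails: a trail is a sequence $(c_1,\dots,c_\ell)$, $\ell\ge 2$, of cells such that (1) neither $c_1$ nor $c_\ell$ is of type $A_4$; (2) consecutive cells share an inner edge-segment; (3) each of $c_2,\dots,c_{\ell-1}$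 is an $A_4$-cell whose two edge-segments shared with its neighbours are opposite on its boundary. A trail and its reversal are the same trail. $\tau(T,T')$ is the number of trails whose end cells are of types $T$ and $T'$. *)

(* Combinatorial encoding of a drawing on the sphere via its
   planarization, represented as a combinatorial map on a finite type of darts. *)
From mathcomp Require Import all_boot.

Set Implicit Arguments.
Unset Strict Implicit.
Unset Printing Implicit Defensive.

Section Drawing.

(* Each edge-segment of the planarization consists
   of two darts exchanged by [alpha]; [sigma] is the rotation of darts around
   their tail point (a vertex of the drawing or a crossing); [cr d] says that
   the tail point of [d] is a crossing (otherwise it is a vertex of the graph). *)
Variables (D : finType) (alpha sigma : D -> D) (cr : pred D).

(* face permutation: the cells of the drawing are the orbits of [phi];
   along a cell boundary, dart d contributes the edge-segment of d and the
   corner at the tail of [phi d] *)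
Definition phi (d : D) : D := sigma (alpha d).

(* straight continuation through the crossing at the head of d *)
Definition nxt (d : D) : D := sigma (sigma (alpha d)).

(* number of crossings of the edge whose first segment is d (d at a vertex):
   least k such that the head of the k-th segment is a vertex *)
Definition crn (d : D) : nat :=
  find (fun k => ~~ cr (alpha (iter k nxt d))) (iota 0 #|D|.+1).

(* the edge of the drawing starting with dart d, as the set of darts of its
   segments (this set is the same from both ends) *)
Definition edgeDarts (d : D) : {set D} :=
  [set x | [exists k : 'I_(crn d).+1,
              (x == iter k nxt d) || (x == alpha (iter k nxt d))]].

Definition Eset (i : nat) : {set {set D}} :=
  [set edgeDarts d | d in [pred d | ~~ cr d & crn d == i]].

Definition samept (x y : D) : bool := fconnect sigma x y.

Definition norb (f : D -> D) : nat := fcard f (mem (@predT D)).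

Definition is_conn_3plane_drawing : Prop :=
  (forall d, alpha (alpha d) = d /\ alpha d != d) /\
  injective sigma /\
  (forall d, cr (sigma d) = cr d) /\
  (forall d, cr d -> fingraph.order sigma d = 4) /\
  (forall x y, connect (fun a b => (b == alpha a) || (b == sigma a)) x y) /\
  (* embedded on the sphere: Euler's formula V - E + F = 2 *)
  norb sigma + norb phi = norb alpha + 2 /\
  (* every edge-segment lies on an edge between two vertices *)
  (forall d, exists k, ~~ cr (alpha (iter k nxt d))) /\
  (forall d, ~~ cr d -> crn d <= 3) /\
  (* no loops *)
  (forall d, ~~ cr d -> ~~ samept d (alpha (iter (crn d) nxt d))) /\
  (* no edge crosses itself (passes twice through the same crossing) *)
  (forall d i j, ~~ cr d -> 1 <= i -> i < j -> j <= crn d ->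
      ~~ samept (iter i nxt d) (iter j nxt d)) /\
  (* adjacent edges do not cross *)
  (forall d d' i j, ~~ cr d -> ~~ cr d' -> samept d d' ->
      edgeDarts d != edgeDarts d' ->
      1 <= i -> i <= crn d -> 1 <= j -> j <= crn d' ->
      ~~ samept (iter i nxt d) (iter j nxt d')).

Definition faceOf (d : D) : {set D} := [set y | fconnect phi d y].
Definition Faces : {set {set D}} := [set faceOf d | d : D].

Definition vcorners (f : {set D}) : nat := #|[set y in f | ~~ cr y]|.
(* size = vertex incidences + edge-segment incidences *)
Definition fsize (f : {set D}) : nat := #|f| + vcorners f.

Definition isA3 (f : {set D}) : bool := (#|f| == 3) && (vcorners f == 0).
Definition isA4 (f : {set D}) : bool := (#|f| == 4) && (vcorners f == 0).
Definition isA5 (f : {set D}) : bool := (#|f| == 5) && (vcorners f == 0).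
Definition isB4 (f : {set D}) : bool := (#|f| == 3) && (vcorners f == 1).
Definition isB5 (f : {set D}) : bool := (#|f| == 4) && (vcorners f == 1).
Definition isL  (f : {set D}) : bool := 6 <= fsize f.

Definition Ncells (P : {set D} -> bool) : nat := #|[set f in Faces | P f]|.

Definition inner (d : D) : bool := cr d && cr (alpha d).

(* A trail (c_1,...,c_l) is recorded by the oriented inner segments
   s_1,...,s_{l-1} it crosses: c_1 = faceOf s_1, c_{j+1} = faceOf (alpha s_j);
   in a middle A4-cell the exit segment is the opposite one on its boundary. *)
Definition isTrail (s : seq D) : bool :=
  if s is d :: p then
    [&& ~~ isA4 (faceOf d), ~~ isA4 (faceOf (alpha (last d p))), all inner s &
        path (fun x y => isA4 (faceOf (alpha x)) && (y == phi (phi (alpha x)))) d p]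
  else false.

Definition tstart (s : seq D) : {set D} :=
  if s is d :: _ then faceOf d else set0.
Definition tend (s : seq D) : {set D} :=
  if s is d :: p then faceOf (alpha (last d p)) else set0.

(* a trail and its reversal are the same trail *)
Definition trev n (t : n.-tuple D) : n.-tuple D := rev_tuple (map_tuple alpha t).

(* tau(T,T'): number of (unordered) trails with end cells of types T and T'.
   Trails cross pairwise distinct darts, hence have at most #|D| segments. *)
Definition tau (P Q : {set D} -> bool) : nat :=
  \sum_(n < #|D|.+1)
     #|[set [set t; trev t] | t in
          [pred t : n.-tuple D | isTrail t &&
             ((P (tstart t) && Q (tend t)) || (Q (tstart t) && P (tend t)))]]|.

End Drawing.

From mathcomp Require Import all_boot zify.

Set Implicit Arguments.
Unset Strict Implicit.
Unset Printing Implicit Defensive.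

(* Count inner darts, i.e. the two orientations of the inner edge-segments.
   An edge with c crossings has c - 1 inner segments, and every inner segment
   lies on an edge with two or three crossings, so there are at most
   2|E_2| + 4|E_3| inner darts.  Every inner dart bounds exactly one cell, and
   a cell with k edge-segments and v vertex corners carries at least k - 2v
   inner darts: 3, 1, 4, 2, 5 for A_3, B_4, A_4, B_5, A_5.  Finally, a trail
   from an L-cell to a cell of type B_4, B_5, A_3 or A_5 is determined by its
   first dart, an inner dart of an L-cell, since it must go straight through
   every A_4-cell it enters and stop at the first other cell. *)

Section Counting.

Variable T : finType.

Lemma card_bigcup_le (I : finType) (P : pred I) (F : I -> {set T}) :
  #|\bigcup_(i | P i) F i| <= \sum_(i | P i) #|F i|.
Proof.
elim/big_rec2: _ => [|i n U _ le_Un]; first by rewrite cards0.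
by rewrite (leq_trans (leq_card_setU _ _).1) // leq_add2l.
Qed.

Lemma card_bigcup_le_const (I : finType) (J : {set I}) (F : I -> {set T}) c :
  (forall i, i \in J -> #|F i| <= c) -> #|\bigcup_(i in J) F i| <= c * #|J|.
Proof.
move=> le_c; apply: leq_trans (card_bigcup_le _ _) _.
by rewrite mulnC -sum_nat_const leq_sum.
Qed.

Lemma sum_card_disjoint_le (I : finType) (P : pred I) (F : I -> {set T}) (Z : {set T}) :
    (forall i, P i -> F i \subset Z) ->
    (forall i j x, P i -> P j -> x \in F i -> x \in F j -> i = j) ->
  \sum_(i | P i) #|F i| <= #|Z|.
Proof.
move=> subZ Fdisj; pose G i := if P i then F i else set0.
have disjG i j : i != j -> [disjoint G i & G j].
  move=> neq_ij; rewrite -setI_eq0; apply/set0Pn => -[x]; rewrite /G inE.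
  case Pi: (P i); case Pj: (P j); rewrite ?inE ?andbF // => /andP[xi xj].
  by rewrite (Fdisj _ _ _ Pi Pj xi xj) eqxx in neq_ij.
have -> : \sum_(i | P i) #|F i| = #|\bigcup_i G i|.
  rewrite -sum1_card partition_disjoint_bigcup // big_mkcond.
  by apply: eq_bigr => i _; rewrite /G sum1_card; case: (P i); rewrite ?cards0.
apply/subset_leq_card/bigcupsP => i _; rewrite /G.
by case: (boolP (P i)) => [/subZ|_]; rewrite ?sub0set.
Qed.

Lemma leq_card_imset_factor (U V : finType) (S : {pred T}) (F : T -> U) (g : T -> V) :
  {in S &, forall x y, g x = g y -> F x = F y} -> #|F @: S| <= #|g @: S|.
Proof.
move=> gF; pose h v := [pick x in S | g x == v].
rewrite -(card_imset _ Some_inj) (leq_trans _ (leq_imset_card (fun v => omap F (h v)) _)) //.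
apply/subset_leq_card/subsetP => _ /imsetP[_ /imsetP[x Sx ->] ->].
apply/imsetP; exists (g x); first exact: imset_f.
rewrite /h; case: pickP => [y /andP[Sy /eqP gyx]|/(_ x)]; last by rewrite Sx eqxx.
by rewrite /= (gF _ _ Sy Sx gyx).
Qed.

End Counting.

Section Drawing.

Variables (D : finType) (alpha sigma : D -> D) (cr : pred D).
Hypothesis alphaK : involutive alpha.
Hypothesis sigma_inj : injective sigma.
Hypothesis cr_sigma : forall d, cr (sigma d) = cr d.

Local Notation ph := (phi alpha sigma).
Local Notation nx := (nxt alpha sigma).
Local Notation ncr := (crn alpha sigma cr).
Local Notation face := (faceOf alpha sigma).
Local Notation inn := (inner alpha cr).

Lemma ph_inj : injective ph.
Proof. by move=> x y /sigma_inj /(can_inj alphaK). Qed.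

Lemma face_refl d : d \in face d.
Proof. by rewrite inE connect0. Qed.

Lemma face_ph d y : y \in face d -> ph y \in face d.
Proof. by rewrite !inE => dy; apply: connect_trans dy (fconnect1 _ _). Qed.

Lemma face_eq d y : y \in face d -> face y = face d.
Proof.
rewrite inE => dy; apply/setP => z; rewrite !inE; apply/idP/idP.
  exact: connect_trans.
by apply: connect_trans; rewrite fconnect_sym //; apply: ph_inj.
Qed.

Lemma cr_ph d : cr (ph d) = cr (alpha d).
Proof. by rewrite /phi cr_sigma. Qed.

(* A boundary dart that is not inner starts or ends at a vertex corner, and ph
   maps the darts ending at a vertex injectively to the darts starting there. *)
Lemma card_face_le d :
  #|face d| <= #|[set y in face d | inn y]| + 2 * vcorners cr (face d).
Proof.
set f := face d; set V := [set y in f | ~~ cr y]; set W := [set y in f | ~~ cr (ph y)].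
have le_WV : #|W| <= #|V|.
  rewrite -(card_imset _ ph_inj); apply/subset_leq_card/subsetP => z /imsetP[y].
  by rewrite inE => /andP[fy ny] ->; rewrite inE ny face_ph.
have sub_f : f \subset [set y in f | inn y] :|: (V :|: W).
  apply/subsetP => y; rewrite !inE => -> /=.
  by rewrite /inner -cr_ph; case: (cr y); case: (cr (ph y)).
apply: leq_trans (subset_leq_card sub_f) _.
rewrite (leq_trans (leq_card_setU _ _).1) // leq_add2l /vcorners -/f -/V.
by rewrite (leq_trans (leq_card_setU _ _).1) // mul2n -addnn leq_add2l.
Qed.

Definition inner_darts_in (P : {set D} -> bool) : {set D} :=
  [set d | inn d && P (face d)].

Lemma Ncells_le_inner_darts (P : {set D} -> bool) w :
  (forall f, P f -> w + 2 * vcorners cr f <= #|f|) ->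
  w * Ncells alpha sigma P <= #|inner_darts_in P|.
Proof.
move=> Pw; rewrite /Ncells mulnC -sum_nat_const.
apply: (@leq_trans (\sum_(f in [set f in Faces alpha sigma | P f]) #|[set y in f | inn y]|)).
  apply: leq_sum => f /[!inE] /andP[/imsetP[d _ ->] Pd].
  by have := card_face_le d; have := Pw _ Pd; lia.
apply: sum_card_disjoint_le => [f|f f' y].
  rewrite inE => /andP[/imsetP[d _ ->] Pd]; apply/subsetP => y.
  by case/setIdP => dy inn_y; rewrite inE inn_y (face_eq dy).
rewrite !inE => /andP[/imsetP[d _ ->] _] /andP[/imsetP[d' _ ->] _] /andP[dy _] /andP[d'y _].
by rewrite -(face_eq dy) (face_eq d'y).
Qed.

Lemma sum_inner_darts_in_le (I : finType) (P : I -> {set D} -> bool) :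
  (forall i j f, P i f -> P j f -> i = j) ->
  \sum_i #|inner_darts_in (P i)| <= #|[set d | inn d]|.
Proof.
move=> Pexcl; apply: sum_card_disjoint_le => [i _|i j d _ _].
  by apply/subsetP => d; rewrite !inE => /andP[-> _].
by rewrite !inE => /andP[_ Pi] /andP[_ Pj]; apply: Pexcl Pi Pj.
Qed.

(* The four end types of L-trails counted by the theorem come first. *)
Definition cell_types : 6.-tuple ({set D} -> bool) :=
  [tuple isA3 cr; isB4 cr; isB5 cr; isA5 cr; isA4 cr; isL cr].

Lemma cell_types_exclusive i j f : tnth cell_types i f -> tnth cell_types j f -> i = j.
Proof.
move=> Hi Hj; apply: val_inj; move: Hi Hj; rewrite !(tnth_nth (isL cr)).
case: i j => -[|[|[|[|[|[|i]]]]]] ? [[|[|[|[|[|[|j]]]]]] ?] //=;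
  rewrite /isA3 /isB4 /isB5 /isA5 /isA4 /isL /fsize; lia.
Qed.

Lemma weighted_Ncells_le_inner_darts :
  3 * Ncells alpha sigma (isA3 cr) + Ncells alpha sigma (isB4 cr)
    + 2 * Ncells alpha sigma (isB5 cr) + 5 * Ncells alpha sigma (isA5 cr)
    + 4 * Ncells alpha sigma (isA4 cr) + #|inner_darts_in (isL cr)|
  <= #|[set d | inn d]|.
Proof.
have A3 : 3 * Ncells alpha sigma (isA3 cr) <= #|inner_darts_in (isA3 cr)|.
  by apply: Ncells_le_inner_darts => f /andP[/eqP-> /eqP->].
have B4 : 1 * Ncells alpha sigma (isB4 cr) <= #|inner_darts_in (isB4 cr)|.
  by apply: Ncells_le_inner_darts => f /andP[/eqP-> /eqP->].
have B5 : 2 * Ncells alpha sigma (isB5 cr) <= #|inner_darts_in (isB5 cr)|.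
  by apply: Ncells_le_inner_darts => f /andP[/eqP-> /eqP->].
have A5 : 5 * Ncells alpha sigma (isA5 cr) <= #|inner_darts_in (isA5 cr)|.
  by apply: Ncells_le_inner_darts => f /andP[/eqP-> /eqP->].
have A4 : 4 * Ncells alpha sigma (isA4 cr) <= #|inner_darts_in (isA4 cr)|.
  by apply: Ncells_le_inner_darts => f /andP[/eqP-> /eqP->].
have := sum_inner_darts_in_le cell_types_exclusive.
rewrite !big_ord_recr big_ord0 /= !(tnth_nth (isL cr)) /=.
lia.
Qed.

Lemma cr_nxt z : cr (nx z) = cr (alpha z).
Proof. by rewrite /nxt !cr_sigma. Qed.

Hypothesis order_sigma_cr : forall d, cr d -> order sigma d = 4.
Hypothesis edge_ends : forall d, exists k, ~~ cr (alpha (iter k nx d)).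
Hypothesis crn_le3 : forall d, ~~ cr d -> ncr d <= 3.

Lemma nxt_alpha_nxt z : cr (alpha z) -> nx (alpha (nx z)) = alpha z.
Proof.
move=> cz; rewrite /nxt alphaK.
by have := iter_order sigma_inj (alpha z); rewrite order_sigma_cr.
Qed.

Lemma iter_nxt_back x k j :
    (forall i, i < k -> cr (alpha (iter i nx x))) -> j <= k ->
  iter j nx (alpha (iter k nx x)) = alpha (iter (k - j) nx x).
Proof.
move=> cr_before; elim: j => [|j IH] lt_jk; first by rewrite subn0.
have e : k - j = (k - j.+1).+1 by lia.
by rewrite iterS IH 1?ltnW // e iterS nxt_alpha_nxt //; apply: cr_before; lia.
Qed.

Lemma crn_end d : ncr d <= #|D| -> ~~ cr (alpha (iter (ncr d) nx d)).
Proof.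
move=> le_D.
have : has (fun k => ~~ cr (alpha (iter k nx d))) (iota 0 #|D|.+1).
  by rewrite has_find size_iota ltnS.
by move/(nth_find 0); rewrite nth_iota // ltnS.
Qed.

(* [crn] searches only up to [#|D|]; a crossing (of degree 4) makes [#|D|]
   large enough for edges with at most three crossings. *)
Lemma crn_end_vertex d x : cr x -> ~~ cr d -> ~~ cr (alpha (iter (ncr d) nx d)).
Proof.
move=> cx nd; apply: crn_end.
have := crn_le3 nd; have : 4 <= #|D| by rewrite -(order_sigma_cr cx) max_card.
lia.
Qed.

Lemma inner_dart_on_edge x :
  inn x -> exists y k, [/\ ~~ cr y, 0 < k < ncr y & x = alpha (iter k nx y)].
Proof.
case/andP => cx cax; have [k end_k min_k] := ex_minnP (edge_ends x).
have cr_before i : i < k -> cr (alpha (iter i nx x)).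
  by move=> lt_ik; apply/negPn/negP => /min_k; lia.
have cr_iter i : i <= k -> cr (iter i nx x).
  by case: i => [|i] le_ik //=; rewrite cr_nxt cr_before.
have back := iter_nxt_back cr_before.
exists (alpha (iter k nx x)), k; split => //; last by rewrite back // subnn alphaK.
apply/andP; split.
  by rewrite lt0n; apply: contraNneq end_k => k0; rewrite k0 /= cax.
rewrite ltnNge; apply/negP => le_k.
by have := crn_end_vertex cx end_k; rewrite back // alphaK cr_iter ?leq_subr.
Qed.

Lemma card_inner_edge_le d :
  ~~ cr d -> #|[set z in edgeDarts alpha sigma cr d | inn z]| <= 2 * (ncr d).-1.
Proof.
move=> nd; set c := ncr d.
set s := [seq iter k nx d | k <- iota 1 c.-1] ++ [seq alpha (iter k nx d) | k <- iota 1 c.-1].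
have -> : 2 * c.-1 = size s by rewrite size_cat !size_map size_iota; lia.
apply: leq_trans (card_size s); apply/subset_leq_card/subsetP => z.
rewrite !inE => /andP[/existsP[[k lt_kc]] /= zk /andP[cz caz]].
have k_gt0 : 0 < k.
  rewrite lt0n; apply/eqP => k0; move: zk cz caz; rewrite k0 => /orP[] /eqP->.
    by rewrite (negbTE nd).
  by rewrite alphaK (negbTE nd).
have k_ltc : k < c.
  rewrite ltn_neqAle -ltnS lt_kc andbT; apply/eqP => kc.
  by move: zk (crn_end_vertex cz nd); rewrite -/c -kc => /orP[] /eqP<-; rewrite ?caz ?cz.
have k_in : k \in iota 1 c.-1 by rewrite mem_iota; lia.
by rewrite /s mem_cat; case/orP: zk => /eqP->; rewrite (map_f _ k_in) ?orbT.
Qed.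

Lemma card_inner_darts_le :
  #|[set d | inn d]| <= 2 * #|Eset alpha sigma cr 2| + 4 * #|Eset alpha sigma cr 3|.
Proof.
pose U c := \bigcup_(E in Eset alpha sigma cr c) [set z in E | inn z].
have le_U c : #|U c| <= 2 * c.-1 * #|Eset alpha sigma cr c|.
  apply: card_bigcup_le_const => E /imsetP[d /[!inE] /andP[nd /eqP <-] ->].
  exact: card_inner_edge_le.
have le_U23 := leq_trans (leq_card_setU (U 2) (U 3)).1 (leq_add (le_U 2) (le_U 3)).
apply: leq_trans _ le_U23; apply/subset_leq_card/subsetP => x; rewrite inE => inn_x.
have [y [k [ny /andP[k_gt0 lt_k] x_eq]]] := inner_dart_on_edge inn_x.
have x_on_y : x \in [set z in edgeDarts alpha sigma cr y | inn z].
  rewrite inE inn_x andbT inE; apply/existsP; exists (Ordinal (leqW lt_k)).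
  by rewrite x_eq eqxx orbT.
have E_y : edgeDarts alpha sigma cr y \in Eset alpha sigma cr (ncr y).
  by apply: imset_f; rewrite inE ny eqxx.
have : (ncr y == 2) || (ncr y == 3) by have := crn_le3 ny; lia.
by rewrite inE; case/orP => /eqP cy; apply/orP; [left|right];
  apply/bigcupP; exists (edgeDarts alpha sigma cr y); rewrite -?cy.
Qed.

Definition trail_step (x y : D) : bool :=
  isA4 cr (face (alpha x)) && (y == ph (ph (alpha x))).

Lemma isTrail_cons d p :
  isTrail alpha sigma cr (d :: p) =
  [&& ~~ isA4 cr (face d), ~~ isA4 cr (face (alpha (last d p))),
      all inn (d :: p) & path trail_step d p].
Proof. by []. Qed.

Lemma trail_path_unique d p q :
    ~~ isA4 cr (face (alpha (last d p))) -> path trail_step d p ->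
    ~~ isA4 cr (face (alpha (last d q))) -> path trail_step d q ->
  p = q.
Proof.
elim: p d q => [|y p IH] d [|z q] //=.
- by move=> nA4 _ _ /andP[/andP[A4 _] _]; rewrite A4 in nA4.
- by move=> _ /andP[/andP[A4 _] _] nA4; rewrite A4 in nA4.
move=> end_p /andP[/andP[_ /eqP ey] p_ok] end_q /andP[/andP[_ /eqP ez] q_ok].
by subst y z; rewrite (IH _ _ end_p p_ok end_q q_ok).
Qed.

Lemma trail_unique s s' :
    isTrail alpha sigma cr s -> isTrail alpha sigma cr s' ->
  ohead s = ohead s' -> s = s'.
Proof.
case: s s' => [|d p] // [|d' q] //; rewrite !isTrail_cons.
move=> /and4P[_ end_p _ p_ok] /and4P[_ end_q _ q_ok] [eq_d]; rewrite -eq_d in end_q q_ok.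
by rewrite eq_d (trail_path_unique end_p p_ok end_q q_ok).
Qed.

Definition rev_trail (s : seq D) : seq D := rev (map alpha s).

Lemma rev_trailK : involutive rev_trail.
Proof.
move=> s; rewrite /rev_trail map_rev revK -map_comp.
by rewrite (@eq_map _ _ _ id) ?map_id.
Qed.

Lemma size_rev_trail s : size (rev_trail s) = size s.
Proof. by rewrite size_rev size_map. Qed.

Lemma rev_trail_cons d p :
  rev_trail (d :: p) = alpha (last d p) :: map alpha (rev (belast d p)).
Proof. by rewrite /rev_trail lastI map_rcons rev_rcons map_rev. Qed.

Lemma ph4_A4 x : isA4 cr (face x) -> ph (ph (ph (ph x))) = x.
Proof.
case/andP => /eqP card4 _; have := iter_order ph_inj x.
suff -> : order ph x = 4 by [].
by rewrite -card4 /order; apply: eq_card => y; rewrite [in RHS]inE.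
Qed.

Lemma trail_step_rev x y : trail_step x y -> trail_step (alpha y) (alpha x).
Proof.
case/andP => A4 /eqP->; rewrite /trail_step alphaK.
have y_in : ph (ph (alpha x)) \in face (alpha x) by do 2 apply: face_ph; apply: face_refl.
by rewrite (face_eq y_in) A4 ph4_A4 ?eqxx.
Qed.

Lemma inner_alpha x : inn (alpha x) = inn x.
Proof. by rewrite /inner alphaK andbC. Qed.

Lemma isTrail_rev s : isTrail alpha sigma cr s -> isTrail alpha sigma cr (rev_trail s).
Proof.
case: s => [|d p] //; rewrite isTrail_cons rev_trail_cons isTrail_cons.
case/and4P => start_d end_p inn_s p_ok.
have last_d : last (last d p) (rev (belast d p)) = d.
  by case: p {end_p inn_s p_ok} => [|y p] //=; rewrite rev_cons last_rcons.
rewrite last_map last_d alphaK start_d end_p path_map rev_path.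
rewrite (sub_path _ p_ok) ?andbT => [|x y /trail_step_rev //].
rewrite -rev_trail_cons /rev_trail all_rev all_map.
by apply: sub_all inn_s => x /=; rewrite inner_alpha.
Qed.

Lemma tstart_rev_trail s : tstart alpha sigma (rev_trail s) = tend alpha sigma s.
Proof. by case: s => [|d p] //; rewrite rev_trail_cons. Qed.

Lemma tend_rev_trail s : tend alpha sigma (rev_trail s) = tstart alpha sigma s.
Proof. by rewrite -[in RHS](rev_trailK s) tstart_rev_trail. Qed.

Definition XL_trail (X : {set D} -> bool) (s : seq D) : bool :=
  isTrail alpha sigma cr s &&
  ((X (tstart alpha sigma s) && isL cr (tend alpha sigma s))
   || (isL cr (tstart alpha sigma s) && X (tend alpha sigma s))).

Definition orient_L (s : seq D) : seq D :=
  if isL cr (tstart alpha sigma s) then s else rev_trail s.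

Lemma size_orient_L s : size (orient_L s) = size s.
Proof. by rewrite /orient_L; case: ifP; rewrite ?size_rev_trail. Qed.

Lemma orient_L_spec (X : {set D} -> bool) s :
    (forall f, X f -> ~~ isL cr f) -> XL_trail X s ->
  [/\ isTrail alpha sigma cr (orient_L s), isL cr (tstart alpha sigma (orient_L s)),
      X (tend alpha sigma (orient_L s)) & orient_L s = s \/ orient_L s = rev_trail s].
Proof.
move=> XnL /andP[tr_s ends]; rewrite /orient_L; case: ifP => Ls.
  case/orP: ends => [/andP[Xs _]|/andP[_ Xe]]; last by split=> //; left.
  by have := XnL _ Xs; rewrite Ls.
rewrite tstart_rev_trail tend_rev_trail.
case/orP: ends => [/andP[Xs Le]|/andP[Ls' _]]; last by rewrite Ls' in Ls.
by split=> //; [exact: isTrail_rev | right].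
Qed.

Definition L_heads (X : {set D} -> bool) (n : nat) : {set option D} :=
  [set ohead (orient_L t) | t : n.-tuple D in [pred t : n.-tuple D | XL_trail X t]].

Lemma trevK n : involutive (@trev D alpha n).
Proof. by move=> t; apply: val_inj; exact: rev_trailK. Qed.

(* An L-trail is determined by its first dart once it is oriented away from
   its L-cell, and a trail and its reversal receive the same orientation. *)
Lemma tau_le_L_heads (X : {set D} -> bool) :
    (forall f, X f -> ~~ isL cr f) ->
  tau alpha sigma cr X (isL cr) <= \sum_(n < #|D|.+1) #|L_heads X n|.
Proof.
move=> XnL; apply: leq_sum => n _; apply: leq_card_imset_factor => t t'.
rewrite !inE => XLt XLt' same_head.
have [tr_o _ _ o_t] := orient_L_spec XnL XLt.
have [tr_o' _ _ o_t'] := orient_L_spec XnL XLt'.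
have eq_o := trail_unique tr_o tr_o' same_head.
have [e|e] : val t = val t' \/ val t = rev_trail t'.
  case: o_t o_t' eq_o => -> [] -> eq_tt'; [left|right|right|left] => //.
    by rewrite -eq_tt' rev_trailK.
  exact: (can_inj rev_trailK).
- by rewrite (val_inj e).
- have -> : t = trev alpha t' by apply: val_inj.
  by rewrite trevK setUC.
Qed.

Lemma sum_L_heads_le (I : finType) (X : I -> {set D} -> bool) :
    (forall i f, X i f -> ~~ isL cr f) -> (forall i j f, X i f -> X j f -> i = j) ->
  \sum_i \sum_(n < #|D|.+1) #|L_heads (X i) n| <= #|inner_darts_in (isL cr)|.
Proof.
move=> XnL Xexcl; rewrite pair_bigA /= -(card_imset (inner_darts_in (isL cr)) Some_inj).
apply: (sum_card_disjoint_le (F := fun p : I * 'I_#|D|.+1 => L_heads (X p.1) p.2))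
  => [[i n] _|[i n] [j m] o _ _].
  apply/subsetP => o /imsetP[t]; rewrite inE => XLt ->.
  have [tr_o L_o _ _] := orient_L_spec (XnL i) XLt.
  case: (orient_L t) tr_o L_o => [|d p] //.
  rewrite isTrail_cons => /and4P[_ _ /andP[inn_d _] _] L_d.
  by apply: imset_f; rewrite inE inn_d.
case/imsetP => t; rewrite inE => XLt ->; case/imsetP => t'; rewrite inE => XLt' same_head.
have [tr_o _ X_o _] := orient_L_spec (XnL i) XLt.
have [tr_o' _ X_o' _] := orient_L_spec (XnL j) XLt'.
have eq_o := trail_unique tr_o tr_o' same_head.
have eq_ij : i = j by apply: Xexcl X_o _; rewrite eq_o.
have eq_nm : n = m.
  apply: val_inj; rewrite /= -(size_tuple t) -(size_tuple t').
  by rewrite -(size_orient_L t) -(size_orient_L t') eq_o.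
by rewrite eq_ij eq_nm.
Qed.

Lemma sum_tau_L_le (I : finType) (X : I -> {set D} -> bool) :
    (forall i f, X i f -> ~~ isL cr f) -> (forall i j f, X i f -> X j f -> i = j) ->
  \sum_i tau alpha sigma cr (X i) (isL cr) <= #|inner_darts_in (isL cr)|.
Proof.
move=> XnL Xexcl; apply: leq_trans (sum_L_heads_le XnL Xexcl).
by apply: leq_sum => i _; exact: tau_le_L_heads (XnL i).
Qed.

Lemma sum_tau_L_le_inner_darts :
  tau alpha sigma cr (isB4 cr) (isL cr) + tau alpha sigma cr (isB5 cr) (isL cr)
    + tau alpha sigma cr (isA3 cr) (isL cr) + tau alpha sigma cr (isA5 cr) (isL cr)
  <= #|inner_darts_in (isL cr)|.
Proof.
pose X (i : 'I_4) := tnth cell_types (widen_ord (isT : 4 <= 6) i).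
have Xexcl i j f : X i f -> X j f -> i = j.
  by move=> Xi Xj; apply: val_inj; have /(congr1 val) := cell_types_exclusive Xi Xj.
have XnL i f : X i f -> ~~ isL cr f.
  move=> Xif; apply/negP => Lf.
  have L5 : tnth cell_types ord_max f by rewrite (tnth_nth (isL cr)).
  have /(congr1 val) /= i5 := cell_types_exclusive Xif L5.
  by have := ltn_ord i; rewrite i5.
have := sum_tau_L_le XnL Xexcl.
rewrite !big_ord_recr big_ord0 /= /X !(tnth_nth (isL cr)) /=.
lia.
Qed.

End Drawing.

Theorem mainTheorem6 (D : finType) (alpha sigma : D -> D) (cr : pred D) :
  is_conn_3plane_drawing alpha sigma cr ->
  3 * Ncells alpha sigma (isA3 cr) + Ncells alpha sigma (isB4 cr)
    + 4 * Ncells alpha sigma (isA4 cr)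
    + 2 * Ncells alpha sigma (isB5 cr) + 5 * Ncells alpha sigma (isA5 cr)
    + tau alpha sigma cr (isB4 cr) (isL cr) + tau alpha sigma cr (isB5 cr) (isL cr)
    + tau alpha sigma cr (isA3 cr) (isL cr) + tau alpha sigma cr (isA5 cr) (isL cr)
  <= 2 * #|Eset alpha sigma cr 2| + 4 * #|Eset alpha sigma cr 3|.
Proof.
case=> alpha_inv [sigma_inj [cr_sigma [order_sigma_cr [_ [_ [edge_ends [crn_le3 _]]]]]]].
have alphaK : involutive alpha by move=> d; case: (alpha_inv d).
have cells := weighted_Ncells_le_inner_darts alphaK sigma_inj cr_sigma.
have trails := sum_tau_L_le_inner_darts cr alphaK sigma_inj.
have edges := card_inner_darts_le alphaK sigma_inj cr_sigma order_sigma_cr edge_ends crn_le3.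
lia.
Qed.
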